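(* For every $\gamma\in[0,1)$, every $\epsilon\ge 0$, $\Delta\ge 0$ and every integer $k\ge 1$, there exist a deterministic MDP with discount factor $\gamma$ and $k+1$ states, an initial value $v_0$ with $\operatorname{span}(v_*-v_0)=\Delta$, error terms $\epsilon_1,\dots,\epsilon_{k-1}$ with $\operatorname{span}(\epsilon_j)\le\epsilon$, and a run of Approximate Value Iteration with these errors such that some policy $\pi_k$ greedy with respect to $v_{k-1}$ satisfies $$\|v_*-v_{\pi_k}\|_\infty = \frac{1}{1-\gamma}\left(\frac{\gamma-\gamma^k}{1-\gamma}\,\epsilon+\gamma^k\Delta\right).$$
   Context: A Markov Decision Process with finite state space $S$, finite action space $A$, reward function $r(s,a)$, transition probabilities $p(s'|s,a)$ and discount factor $\gamma\in[0,1)$. For a (deterministic, stationary) policy $\pi:S\to A$, let $r_\pi(s)=r(s,\pi(s))$, let $P_\pi$ be the stochastic matrix $P_\pi(s,s')=p(s'|s,\pi(s))$, and let $T_\pi v=r_\pi+\gamma P_\pi v$ be the Bellman operator of $\pi$; $v_\pi$ is its unique fixed point (the expected $\gamma$-discounted total reward of $\pi$). The Bellman optimality operator is $Tv=\max_\pi T_\pi v$ (componentwise), $v_*$ is its fixed point (the optimal value), and a policy $\pi$ is greedy with respect to $v$ if $T_\pi v=Tv$. For a function $f:S\to\mathbb R$, $\operatorname{span}(f)=\max_s f(s)-\min_s f(s)$. Approximate Value Iteration: starting from an arbitrary $v_0:S\to\mathbb R$, for $j\ge 0$ pick any policy $\pi_{j+1}$ greedy with respect to $v_j$ and set $v_{j+1}=T_{\pi_{j+1}}v_j+\epsilon_{j+1}$,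 where $\epsilon_{j+1}:S\to\mathbb R$ are arbitrary error terms. *)

From HB Require Import structures.
From mathcomp Require Import all_boot all_order all_algebra.
Set Implicit Arguments. Unset Strict Implicit. Unset Printing Implicit Defensive.
Import Order.TTheory GRing.Theory Num.Theory.
Local Open Scope ring_scope.

Section MDP.
Variables (R : realFieldType) (S A : finType).
(* r : reward, P s a s' = p(s'|s,a), g = discount factor *)
Variables (r : S -> A -> R) (P : S -> A -> S -> R) (g : R).

Definition is_kernel : Prop :=
  forall s a, (forall s', 0 <= P s a s') /\ \sum_(s' : S) P s a s' = 1.

Definition deterministic : Prop :=
  forall s a, exists s' : S, forall s'', P s a s'' = (s'' == s')%:R.

Definition Qval (v : S -> R) (s : S) (a : A) : R :=
  r s a + g * \sum_(s' : S) P s a s' * v s'.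

Definition Tpi (pi : S -> A) (v : S -> R) : S -> R := fun s => Qval v s (pi s).

(* w = T v, where (T v)(s) = max_pi (T_pi v)(s) = max_a Qval v s a *)
Definition is_Topt (v w : S -> R) : Prop :=
  forall s, (exists a, w s = Qval v s a) /\ (forall a, Qval v s a <= w s).

Definition greedy (pi : S -> A) (v : S -> R) : Prop :=
  forall s a, Qval v s a <= Tpi pi v s.

Definition is_value_of (pi : S -> A) (v : S -> R) : Prop := Tpi pi v = v.
Definition is_optimal_value (v : S -> R) : Prop := is_Topt v v.

Definition AVI_run (n : nat) (vs : nat -> S -> R) (pis : nat -> S -> A)
    (eps : nat -> S -> R) : Prop :=
  forall j, (j.+1 <= n)%N ->
    greedy (pis j.+1) (vs j) /\
    vs j.+1 = (fun s => Tpi (pis j.+1) (vs j) s + eps j.+1 s).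

End MDP.

(* span f = max_s f s - min_s f s = max_{s,t} (f s - f t) (0 for empty S) *)
Definition fspan (R : realFieldType) (S : finType) (f : S -> R) : R :=
  \big[Num.max/0]_(s : S) \big[Num.max/0]_(t : S) (f s - f t).

Definition supnorm (R : realFieldType) (S : finType) (f : S -> R) : R :=
  \big[Num.max/0]_(s : S) `|f s|.

From HB Require Import structures.
From mathcomp Require Import all_boot all_order all_algebra.
From mathcomp.algebra_tactics Require Import ring lra.
From mathcomp Require Import zify.
From Stdlib Require Import FunctionalExtensionality.
Import Order.TTheory GRing.Theory Num.Theory.
Local Open Scope ring_scope.

(* The MDP is a chain of states 0, ..., k with two actions: action
   [false] moves one step to the left (state 0 is absorbing) with reward 0;
   action [true] at the last state k stays there with reward -c, and elsewhere
   acts like [false].  All rewards are <= 0 and 0 is attainable, so v_* = 0.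
   Starting from a single pulse of height Delta at state 1, AVI with the
   "always left" policy shifts the pulse one state to the right per step,
   discounting it by g and adding an error pulse of height eps on top; after
   k-1 steps the pulse has height D_{k-1} = eps + g D_{k-2} and sits at state
   k.  Choosing c = g D_{k-1} makes "stay at k" tie with "go left" there, so
   the policy that stays at k is greedy, and its value -c/(1-g) at state k is
   exactly the claimed loss. *)

Section SpanNorm.
Variables (R : realFieldType) (S : finType).

Lemma bigmax0_ge0 (F : S -> R) : 0 <= \big[Num.max/0]_(s : S) F s.
Proof.
apply: (big_rec (fun x => 0 <= x)) => // s x _ x_ge0.
by rewrite le_max x_ge0 orbT.
Qed.

Lemma bigmax0_le (F : S -> R) (c : R) :
  0 <= c -> (forall s, F s <= c) -> \big[Num.max/0]_(s : S) F s <= c.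
Proof.
move=> c_ge0 F_le; apply: (big_ind (fun x => x <= c)) => // x y.
by rewrite ge_max => -> ->.
Qed.

Lemma le_bigmax0 (F : S -> R) (s : S) : F s <= \big[Num.max/0]_(s : S) F s.
Proof. by rewrite (bigD1 s) //= le_max lexx. Qed.

Lemma fspan_le (f : S -> R) (c : R) :
  0 <= c -> (forall s t, f s - f t <= c) -> fspan f <= c.
Proof. by move=> c_ge0 f_le; do 2![apply: bigmax0_le => // ?]. Qed.

Lemma fspan_ge (f : S -> R) (s t : S) : f s - f t <= fspan f.
Proof.
apply: le_trans (le_bigmax0 _ s).
exact: le_bigmax0 (fun t => f s - f t) t.
Qed.

Lemma fspan_opp (f : S -> R) : fspan (fun s => - f s) = fspan f.
Proof.
have span_opp_le (h : S -> R) : fspan (fun s => - h s) <= fspan h.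
  apply: fspan_le; first exact: bigmax0_ge0.
  by move=> s t; rewrite opprK addrC; apply: fspan_ge.
apply/eqP; rewrite eq_le span_opp_le /=.
have {1}-> : f = (fun s => - - f s).
  by apply: functional_extensionality => s; rewrite opprK.
exact: span_opp_le.
Qed.

Lemma fspan_indicator_le (x : R) (p : pred S) :
  0 <= x -> fspan (fun s => x * (p s)%:R) <= x.
Proof.
move=> x_ge0; apply: fspan_le => // s t.
by case: (p s); case: (p t); rewrite ?mulr1 ?mulr0; lra.
Qed.

Lemma fspan_indicator (x : R) (p : pred S) (s0 s1 : S) :
  0 <= x -> p s0 -> ~~ p s1 -> fspan (fun s => x * (p s)%:R) = x.
Proof.
move=> x_ge0 ps0 /negbTE ps1; apply/eqP; rewrite eq_le fspan_indicator_le //=.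
by apply: le_trans (fspan_ge _ s0 s1); rewrite ps0 ps1 mulr1 mulr0 subr0.
Qed.

Lemma supnorm_indicator (x : R) (p : pred S) (s0 : S) :
  p s0 -> supnorm (fun s => x * (p s)%:R) = `|x|.
Proof.
move=> ps0; apply/eqP; rewrite eq_le; apply/andP; split.
  apply: bigmax0_le => // s.
  by case: (p s); rewrite ?mulr1 ?mulr0 ?normr0.
by apply: le_trans (le_bigmax0 _ s0); rewrite ps0 mulr1.
Qed.

End SpanNorm.

Arguments fspan_indicator {R S} x p s0 s1.
Arguments supnorm_indicator {R S} x p s0.

Section DiracKernel.
Variables (R : realFieldType) (S A : finType) (step : S -> A -> S).

Definition dirac_kernel (s : S) (a : A) (s' : S) : R := (s' == step s a)%:R.

Lemma sum_dirac (t : S) (v : S -> R) : \sum_(s' : S) (s' == t)%:R * v s' = v t.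
Proof.
rewrite (bigD1 t) //= eqxx mul1r big1 ?addr0 // => s' /negbTE ->.
by rewrite mul0r.
Qed.

Lemma dirac_kernel_is_kernel : is_kernel dirac_kernel.
Proof.
move=> s a; split=> [s'|]; first by rewrite /dirac_kernel ler0n.
rewrite -[RHS](sum_dirac (step s a) (fun _ => 1)).
by apply: eq_bigr => s' _; rewrite mulr1.
Qed.

Lemma dirac_kernel_deterministic : deterministic dirac_kernel.
Proof. by move=> s a; exists (step s a). Qed.

Lemma Qval_dirac (r : S -> A -> R) (g : R) (v : S -> R) (s : S) (a : A) :
  Qval r dirac_kernel g v s a = r s a + g * v (step s a).
Proof. by rewrite /Qval /dirac_kernel sum_dirac. Qed.

End DiracKernel.

Arguments dirac_kernel R {S A} step.

Lemma zero_is_optimal_value (R : realFieldType) (S A : finType)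
    (r : S -> A -> R) (P : S -> A -> S -> R) (g : R) (a0 : S -> A) :
  (forall s a, r s a <= 0) -> (forall s, r s (a0 s) = 0) ->
  is_optimal_value r P g (fun _ => 0).
Proof.
move=> r_le0 r_a0 s.
have Q0 a : Qval r P g (fun _ => 0) s a = r s a.
  by rewrite /Qval big1 ?mulr0 ?addr0 // => s' _; rewrite mulr0.
by split; [exists (a0 s); rewrite Q0 r_a0 | move=> a; rewrite Q0].
Qed.

Fixpoint pulse_height (R : realFieldType) (g eps Delta : R) (m : nat) : R :=
  if m is m'.+1 then eps + g * @pulse_height R g eps Delta m' else Delta.
Arguments pulse_height {R}.

Lemma pulse_height_ge0 (R : realFieldType) (g eps Delta : R) (m : nat) :
  0 <= g -> 0 <= eps -> 0 <= Delta -> 0 <= pulse_height g eps Delta m.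
Proof.
move=> g_ge0 eps_ge0 D_ge0; elim: m => //= m IH.
by rewrite addr_ge0 ?mulr_ge0.
Qed.

Lemma pulse_height_closed (R : realFieldType) (g eps Delta : R) (m : nat) :
  g != 1 ->
  pulse_height g eps Delta m = (1 - g ^+ m) / (1 - g) * eps + g ^+ m * Delta.
Proof.
move=> g_neq1; have : 1 - g != 0 by rewrite subr_eq0 eq_sym.
elim: m => [|m IH] g1 /=; first by rewrite expr0 subrr !mul0r add0r mul1r.
by rewrite IH // exprS; field.
Qed.

Lemma pulse_height_loss (R : realFieldType) (g eps Delta : R) (k : nat) :
  (1 <= k)%N -> g != 1 ->
  g * pulse_height g eps Delta k.-1 / (1 - g) =
  (1 - g)^-1 * ((g - g ^+ k) / (1 - g) * eps + g ^+ k * Delta).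
Proof.
move=> k_ge1 g_neq1; have g1 : 1 - g != 0 by rewrite subr_eq0 eq_sym.
rewrite pulse_height_closed // -[in RHS](prednK k_ge1) exprS.
by field.
Qed.

Section Chain.
Variables (R : realFieldType) (k : nat) (g c : R).

Definition chain_step (s : 'I_k.+1) (a : bool) : 'I_k.+1 :=
  if a && (val s == k) then s else inord (val s).-1.

Definition chain_reward (s : 'I_k.+1) (a : bool) : R :=
  if a && (val s == k) then - c else 0.

Local Notation P := (dirac_kernel R chain_step).
Local Notation Q v s a := (Qval chain_reward P g v s a).

Definition go_left : 'I_k.+1 -> bool := fun _ => false.
Definition stay_last : 'I_k.+1 -> bool := fun s => val s == k.

Lemma val_step_left (s : 'I_k.+1) : val (chain_step s false) = (val s).-1.
Proof. by rewrite /chain_step /= inordK // (leq_ltn_trans (leq_pred _)). Qed.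

Lemma Qval_left (v : 'I_k.+1 -> R) (s : 'I_k.+1) :
  Q v s false = g * v (chain_step s false).
Proof. by rewrite Qval_dirac /chain_reward add0r. Qed.

Lemma Qval_true (v : 'I_k.+1 -> R) (s : 'I_k.+1) :
  Q v s true = if val s == k then - c + g * v s else Q v s false.
Proof.
rewrite Qval_left Qval_dirac /chain_reward /chain_step /=.
by case: (val s == k); rewrite ?add0r.
Qed.

Lemma greedy_go_left (v : 'I_k.+1 -> R) :
  (forall s, val s == k -> - c + g * v s <= g * v (chain_step s false)) ->
  greedy chain_reward P g go_left v.
Proof.
move=> stay_le s [] /=; rewrite /Tpi /go_left ?Qval_true //.
by case: ifP => [/stay_le|_]; rewrite ?Qval_left.
Qed.

Lemma greedy_stay_last (v : 'I_k.+1 -> R) :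
  (forall s, val s == k -> g * v (chain_step s false) <= - c + g * v s) ->
  greedy chain_reward P g stay_last v.
Proof.
move=> stay_ge s a; rewrite /Tpi /stay_last.
case sk: (val s == k); case: a; rewrite ?Qval_true ?sk //.
by rewrite Qval_left stay_ge.
Qed.

(* When c = g x, staying at k ties with going left for a pulse of height x
   at k, so the policy staying at k is greedy with respect to it. *)
Lemma greedy_stay_last_pulse (x : R) :
  (0 < k)%N -> c = g * x -> greedy chain_reward P g stay_last (fun s => x * (val s == k)%:R).
Proof.
move=> k_gt0 cE; apply: greedy_stay_last => s /eqP sk.
rewrite val_step_left sk eqxx.
have -> : (k.-1 == k) = false by lia.
by rewrite cE mulr0 mulr0 mulr1 addNr.
Qed.

Lemma Tpi_go_left_pulse (x : R) (n : nat) :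
  Tpi chain_reward P g go_left (fun s => x * (val s == n.+1)%:R) =
  (fun s => g * x * (val s == n.+2)%:R).
Proof.
apply: functional_extensionality => s.
rewrite /Tpi Qval_left val_step_left mulrA.
by case: (val s) => [|[|m]].
Qed.

(* With c >= 0 every reward is nonpositive and going left earns 0: v_* = 0. *)
Lemma chain_optimal_value :
  0 <= c -> is_optimal_value chain_reward P g (fun _ => 0).
Proof.
move=> c_ge0; apply: (@zero_is_optimal_value _ _ _ _ _ _ go_left) => [s a|s] //.
by rewrite /chain_reward; case: ifP; rewrite ?oppr_le0.
Qed.

(* Staying at k forever collects -c at every step from k; elsewhere the
   agent drifts towards the absorbing state 0 and collects nothing. *)
Lemma value_stay_last :
  1 - g != 0 ->
  is_value_of chain_reward P g stay_last
    (fun s => - c / (1 - g) * (val s == k)%:R).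
Proof.
move=> g1; apply: functional_extensionality => s; rewrite /Tpi /stay_last.
case sk: (val s == k); rewrite ?Qval_true ?sk.
  by rewrite mulr1; field.
rewrite Qval_left val_step_left.
have -> : ((val s).-1 == k) = false.
  by move: sk (ltn_ord s); rewrite /=; lia.
by rewrite !mulr0.
Qed.

Lemma avi_go_left (eps Delta : R) :
  0 <= g -> 0 <= eps -> 0 <= Delta -> 0 <= c ->
  AVI_run chain_reward P g k.-1
    (fun j s => pulse_height g eps Delta j * (val s == j.+1)%:R)
    (fun _ => go_left) (fun j s => eps * (val s == j.+1)%:R).
Proof.
move=> g_ge0 eps_ge0 D_ge0 c_ge0 j jk; split.
  apply: greedy_go_left => s /eqP sk.
  have -> : (val s == j.+1) = false by lia.
  rewrite !mulr0 addr0; apply: (@le_trans _ _ 0); first by rewrite oppr_le0.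
  by rewrite !mulr_ge0 ?ler0n ?pulse_height_ge0.
rewrite Tpi_go_left_pulse; apply: functional_extensionality => s /=.
by rewrite mulrDl addrC.
Qed.

End Chain.

Theorem proposition1 (R : realFieldType) (g eps Delta : R) (k : nat) :
  0 <= g -> g < 1 -> 0 <= eps -> 0 <= Delta -> (1 <= k)%N ->
  exists (S A : finType) (r : S -> A -> R) (P : S -> A -> S -> R),
    #|S| = k.+1 /\ is_kernel P /\ deterministic P /\
    exists (vstar v0 : S -> R) (errs : nat -> S -> R)
           (vs : nat -> S -> R) (pis : nat -> S -> A) (pik : S -> A)
           (vpik : S -> R),
      is_optimal_value r P g vstar /\
      fspan (fun s => vstar s - v0 s) = Delta /\
      (forall j, (1 <= j <= k.-1)%N -> fspan (errs j) <= eps) /\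
      vs 0%N = v0 /\
      AVI_run r P g k.-1 vs pis errs /\
      greedy r P g pik (vs k.-1) /\
      is_value_of r P g pik vpik /\
      supnorm (fun s => vstar s - vpik s) =
        (1 - g)^-1 * ((g - g ^+ k) / (1 - g) * eps + g ^+ k * Delta).
Proof.
move=> g_ge0 g_lt1 eps_ge0 D_ge0 k_ge1.
pose D := pulse_height g eps Delta.
pose c := g * D k.-1.
have c_ge0 : 0 <= c by rewrite mulr_ge0 ?pulse_height_ge0.
have g1 : 1 - g != 0 by rewrite subr_eq0 eq_sym lt_eqF.
pose vs j (s : 'I_k.+1) := D j * (val s == j.+1)%:R.
exists 'I_k.+1, bool, (chain_reward R k c), (dirac_kernel R (chain_step k)).
split; first by rewrite card_ord.
split; first exact: dirac_kernel_is_kernel.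
split; first exact: dirac_kernel_deterministic.
exists (fun _ => 0), (vs 0%N), (fun j s => eps * (val s == j.+1)%:R), vs,
  (fun _ => go_left k), (stay_last k),
  (fun s => - c / (1 - g) * (val s == k)%:R).
split; first exact: chain_optimal_value.
split.
  rewrite (_ : (fun s => _) = fun s : 'I_k.+1 => - (Delta * (val s == 1)%:R));
    last by apply: functional_extensionality => s; rewrite sub0r.
  by rewrite fspan_opp (fspan_indicator _ _ (inord 1) ord0) //= inordK.
split; first by move=> j _; apply: fspan_indicator_le.
split; first by [].
split; first exact: avi_go_left.
split; first by rewrite /vs prednK //; apply: greedy_stay_last_pulse.
split; first exact: value_stay_last.
rewrite (_ : (fun s => _) = fun s : 'I_k.+1 => c / (1 - g) * (val s == k)%:R);
  last by apply: functional_extensionality => s; rewrite sub0r !mulNr opprK.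
rewrite (supnorm_indicator _ _ ord_max) //= ger0_norm;
  last by rewrite divr_ge0 // subr_ge0 ltW.
by rewrite pulse_height_loss // (lt_eqF g_lt1).
Qed.
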